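(* Let $\sigma^0=(+,-,-,-,-,-,+,+,+,+,+,-)$ be the sign pattern of length $12$. There exists no real monic polynomial $P(x)=x^{11}+a_{10}x^{10}+\cdots+a_1x+a_0$ whose coefficients have the signs prescribed by $\sigma^0$ (i.e. $a_{10},a_9,a_8,a_7,a_6<0$, $a_5,a_4,a_3,a_2,a_1>0$, $a_0<0$) and which has exactly one positive root and exactly eight negative roots, all of them simple (and hence a pair of complex conjugate non-real roots). In other words, the sign pattern $\sigma^0$ is not realizable with the admissible pair $(1,8)$.
   Context: A sign pattern is a finite sequence of $\pm$ signs with leading sign $+$; a polynomial $x^d+a_{d-1}x^{d-1}+\cdots+a_0$ with all coefficients nonzero defines the sign pattern consisting of the signs of its coefficients, listed from $x^d$ down to $x^0$. A sign pattern $\sigma$ is realizable with a pair $(pos,neg)$ if some monic real polynomial with sign pattern $\sigma$ has exactly $pos$ positive and exactly $neg$ negative roots, all simple. *)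

From mathcomp Require Import all_boot all_order all_algebra.
From mathcomp Require Import reals.
Set Implicit Arguments. Unset Strict Implicit. Unset Printing Implicit Defensive.
Import Order.TTheory GRing.Theory Num.Theory.
Local Open Scope ring_scope.

(* A sign pattern is a sequence of booleans: true = '+', false = '-',
   listed from the leading coefficient (x^d) down to the constant term (x^0). *)
Definition sign_pattern := seq bool.

Section Defs.
Variable R : realType.

Definition has_sign_pattern (p : {poly R}) (sigma : sign_pattern) : Prop :=
  size p = size sigma /\
  forall i : nat, (i < size p)%N ->
    (if nth true sigma (size p - 1 - i)%N then 0 < p`_i else p`_i < 0).

Definition num_roots_in (p : {poly R}) (P : R -> bool) (k : nat) : Prop :=
  exists rs : seq R, [/\ uniq rs, size rs = k &
     forall x : R, (x \in rs) = (P x && root p x)].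

Definition roots_simple_in (p : {poly R}) (P : R -> bool) : Prop :=
  forall x : R, P x -> root p x -> ~~ root p^`() x.

Definition realizable (sigma : sign_pattern) (pos neg : nat) : Prop :=
  exists p : {poly R},
    [/\ p \is monic, has_sign_pattern p sigma,
        num_roots_in p (fun x => 0 < x) pos,
        num_roots_in p (fun x => x < 0) neg &
        roots_simple_in p (fun x => (0 < x) || (x < 0))].
End Defs.

Definition sigma0 : sign_pattern :=
  [:: true; false; false; false; false; false; true; true; true; true; true; false].

From mathcomp Require Import all_boot all_order all_algebra.
From mathcomp Require Import reals.
From mathcomp Require Import polyrcf cauchyreals ring lra zify.
Set Implicit Arguments. Unset Strict Implicit. Unset Printing Implicit Defensive.
Import Order.TTheory GRing.Theory Num.Theory.
Local Open Scope ring_scope.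

(* A realization P of sigma0 with one positive root xi and eight negative
   roots factors as P = (x^2 + b x + g) (x - xi) r(x): the quadratic has no
   real root (it would be a double root of P, or 0), and r = x^8 + ... + r_0
   has the eight negative roots, hence positive coefficients satisfying
   Newton's inequalities.  In the normalised ratios t_k = r_(k-1) / (xi r_k),
   B = -b / xi and G = g / xi^2, the signs of a_1, a_5, a_6 and a_10 become
   polynomial inequalities which, together with B^2 < 4 G and the chain of
   ratio bounds given by Newton's inequalities, are contradictory, both when
   t_5 <= 1 and when t_5 > 1. *)

Section SumSquares.
Variable R : realDomainType.

Lemma sqr_sum_le (u : seq R) :
  (\sum_(x <- u) x) ^+ 2 <= (size u)%:R * \sum_(x <- u) x ^+ 2.
Proof.
elim: u => [|a u IH]; first by rewrite !big_nil mul0r expr0n.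
have dev : \sum_(x <- u) (x - a) ^+ 2 =
    \sum_(x <- u) x ^+ 2 - 2 * a * \sum_(x <- u) x + (size u)%:R * a ^+ 2.
  elim: (u) => [|x v IHv]; first by rewrite !big_nil mul0r; ring.
  by rewrite !big_cons IHv /= mulrSr; ring.
have dev_ge0 : 0 <= \sum_(x <- u) (x - a) ^+ 2.
  by apply: sumr_ge0 => x _; exact: sqr_ge0.
rewrite dev in dev_ge0; rewrite !big_cons /= mulrSr; nra.
Qed.

End SumSquares.

Section LowCoefsProdXsubC.
Variable R : fieldType.

Lemma low_coefs_prod_XsubC (w : seq R) (P := \prod_(z <- w) ('X - z%:P)) :
  all (fun z => z != 0) w ->
  P`_1 = - P`_0 * \sum_(z <- w) z^-1 /\
  P`_1 ^+ 2 - 2 * P`_0 * P`_2 = P`_0 ^+ 2 * \sum_(z <- w) z^-1 ^+ 2.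
Proof.
rewrite {}/P; elim: w => [|a w IH] /=.
  by rewrite !big_nil !coefE /= => _; split; ring.
case/andP=> a0 /IH [E1 E2]; rewrite !big_cons mulrBl !coefE /=.
move: E1 E2; set P0 := _`_0; set P1 := _`_1; set P2 := _`_2.
move=> E1 E2; split; first by rewrite E1; field.
transitivity (P0 ^+ 2 + a ^+ 2 * (P1 ^+ 2 - 2 * P0 * P2)); first by ring.
by rewrite E2; field.
Qed.

End LowCoefsProdXsubC.

Section Rolle.
Variable R : rcfType.
Implicit Types (p : {poly R}) (s : seq R).

Lemma rolle_path p a s : path <%R a s -> root p a -> all (root p) s ->
  exists s', [/\ size s' = size s, path <%R a s' & all (root p^`()) s'].
Proof.
elim: s a => [|b s IH] a /=; first by exists [::].
case/andP=> ab bs pa /andP[pb ps].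
have [c] := poly_rolle ab (etrans (eqP pa) (esym (eqP pb))).
rewrite in_itv /= => /andP[ac cb] p'c.
have [s' [sz bs' p's']] := IH b bs pb ps.
exists (c :: s'); split => /=; first by rewrite sz.
- by rewrite ac (path_le lt_trans cb bs').
- by rewrite /root p'c eqxx.
Qed.

Lemma rolle_sorted p s : sorted <%R s -> all (root p) s ->
  exists s', [/\ size s' = (size s).-1, sorted <%R s' & all (root p^`()) s'].
Proof.
case: s => [|a s] /=; first by exists [::].
move=> as_ /andP[pa ps]; have [s' [sz as' p's']] := rolle_path as_ pa ps.
by exists s'; split => //; exact: path_sorted as'.
Qed.

Lemma rolle_sorted_derivn p s n : sorted <%R s -> all (root p) s ->
  exists s', [/\ size s' = (size s - n)%N, sorted <%R s' & all (root p^`(n)) s'].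
Proof.
move=> ss ps; elim: n => [|n [s' [sz ss' ps']]]; first by exists s; rewrite subn0.
have [s'' [sz'' ss'' ps'']] := rolle_sorted ss' ps'.
by exists s''; rewrite derivnS sz'' sz subnS.
Qed.

End Rolle.

Section Newton.
Variable R : rcfType.

(* If 0 is a root then g_0 = 0; otherwise -g_1 / g_0 and
   (g_1^2 - 2 g_0 g_2) / g_0^2 are the first two power sums of the inverses
   of the roots, and Cauchy-Schwarz compares them. *)
Lemma newton_low_coefs (g : {poly R}) (w : seq R) :
  uniq w -> all (root g) w -> (size g <= (size w).+1)%N ->
  2 * (size w)%:R * g`_0 * g`_2 <= ((size w)%:R - 1) * g`_1 ^+ 2.
Proof.
move=> uw gw szg; set n := (size w)%:R.
have [w0|w_neq0] := boolP (0 \in w).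
  have /eqP g0 : root g 0 := allP gw 0 w0.
  rewrite -horner_coef0 g0 mulr0 mul0r; apply: mulr_ge0; last exact: sqr_ge0.
  by rewrite subr_ge0 ler1n lt0n size_eq0; apply: contraTneq w0 => ->.
have [q gE] : exists q, g = q * \prod_(z <- w) ('X - z%:P).
  by apply: uniq_roots_prod_XsubC => //; rewrite uniq_rootsE.
rewrite {}gE in szg *.
have {szg} /size1_polyC -> : (size q <= 1)%N.
  have [->|q0] := eqVneq q 0; first by rewrite size_poly0.
  move: szg; rewrite size_Mmonic ?monic_prod_XsubC // size_prod_XsubC addnS /=.
  by rewrite -[(size w).+1]add1n leq_add2r.
rewrite !coefCM; set c := q`_0.
have nz : all (fun z => z != 0) w.
  by apply/allP => z zw; apply: contraNneq w_neq0 => <-.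
have [] := low_coefs_prod_XsubC nz; set P0 := _`_0; set P1 := _`_1; set P2 := _`_2.
set S1 := \sum_(z <- w) _; set S2 := \sum_(z <- w) _ => E1 E2.
have CS := sqr_sum_le [seq z^-1 | z <- w].
rewrite !big_map size_map -/S1 -/S2 -/n in CS.
rewrite -subr_ge0.
have -> : (n - 1) * (c * P1) ^+ 2 - 2 * n * (c * P0) * (c * P2) =
    (c * P0) ^+ 2 * (n * S2 - S1 ^+ 2).
  transitivity (c ^+ 2 * (n * (P1 ^+ 2 - 2 * P0 * P2) - P1 ^+ 2)); first by ring.
  by rewrite E2 E1; ring.
by apply: mulr_ge0; [exact: sqr_ge0 | rewrite subr_ge0].
Qed.

(* By Rolle, p^(k-1) has n - k + 1 distinct real roots; its three lowest
   coefficients are p_(k-1) (k-1)!, p_k k! and p_(k+1) (k+1)! / 2. *)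
Lemma newton_ineq (p : {poly R}) (s : seq R) k :
  uniq s -> all (root p) s -> (size p <= (size s).+1)%N -> (0 < k < size s)%N ->
  (k.+1 * (size s - k).+1)%:R * p`_k.-1 * p`_k.+1
    <= (k * (size s - k))%:R * p`_k ^+ 2.
Proof.
move=> us ps szp /andP[]; case: k => // j _ jn /=.
have [s' [sz' ss' ps']] := rolle_sorted_derivn j
  (etrans (sort_lt_sorted s) us) (etrans (all_sort _ _ _) ps).
rewrite size_sort in sz'.
have := newton_low_coefs (lt_sorted_uniq ss') ps'.
have szd : (size p - j <= (size s - j).+1)%N by lia.
rewrite size_derivn sz' => /(_ szd).
have -> : (size s - j = (size s - j.+1).+1)%N by lia.
set m := (size s - j.+1)%N; rewrite !coef_derivn addn0 addn1 addn2 ffactnn.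
have F1 : (j.+1 ^_ j = j.+1 * j`!)%N.
  by rewrite -factS -(ffact_fact (leqnSn j)) subSnn muln1.
have F2 : (j.+2 ^_ j * 2 = j.+2 * j.+1 * j`!)%N.
  by rewrite -mulnA -!factS -(ffact_fact (leqW (leqnSn j))) -addn2 addKn.
rewrite F1 -[p`_j *+ _]mulr_natr -[p`_j.+1 *+ _]mulr_natr -[p`_j.+2 *+ _]mulr_natr.
rewrite !natrM => newton.
have F2R : (j.+2 ^_ j)%:R * 2 = j.+2%:R * j.+1%:R * j`!%:R :> R.
  by rewrite -!natrM -F2 natrM.
set f : R := j`!%:R; set a : R := (j.+2 ^_ j)%:R.
have fpos : 0 < f by rewrite ltr0n fact_gt0.
have cpos : 0 < j.+1%:R * f ^+ 2 by rewrite mulr_gt0 ?exprn_gt0 ?ltr0Sn.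
rewrite -(ler_pM2l cpos); move: newton; rewrite -/f -/a.
have -> : 2 * m.+1%:R * (p`_j * f) * (p`_j.+2 * a) =
    j.+1%:R * f ^+ 2 * (j.+2%:R * m.+1%:R * p`_j * p`_j.+2).
  transitivity (m.+1%:R * f * p`_j * p`_j.+2 * (a * 2)); first by ring.
  by rewrite F2R -/f; ring.
suff -> : (m.+1%:R - 1) * (p`_j.+1 * (j.+1%:R * f)) ^+ 2 =
  j.+1%:R * f ^+ 2 * (j.+1%:R * m%:R * p`_j.+1 ^+ 2) by [].
by rewrite mulrSr; ring.
Qed.

End Newton.

Section NegativeRoots.
Variable R : realDomainType.
Implicit Types (s : seq R).

Lemma coef_prod_XsubC_ge0 s i : all (fun z => z < 0) s ->
  0 <= (\prod_(z <- s) ('X - z%:P))`_i.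
Proof.
elim: s i => [|a s IH] i /=; first by rewrite big_nil coefC; case: i.
case/andP=> a0 s0; rewrite big_cons mulrBl coefB coefXM coefCM -mulNr.
have aP k : 0 <= - a * (\prod_(z <- s) ('X - z%:P))`_k.
  by rewrite mulr_ge0 ?IH // oppr_ge0 ltW.
by case: i => [|i] /=; rewrite ?add0r ?addr_ge0 ?IH.
Qed.

Lemma coef_prod_XsubC_gt0 s i : all (fun z => z < 0) s -> (i <= size s)%N ->
  0 < (\prod_(z <- s) ('X - z%:P))`_i.
Proof.
elim: s i => [|a s IH] i /=; first by rewrite big_nil coefC; case: i.
case/andP=> a0 s0 lei; rewrite big_cons mulrBl coefB coefXM coefCM -mulNr.
case: i lei => [|i] lei /=; first by rewrite add0r mulr_gt0 ?IH // oppr_gt0.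
by rewrite ltr_wpDr ?IH // mulr_ge0 ?coef_prod_XsubC_ge0 // oppr_ge0 ltW.
Qed.

End NegativeRoots.

Section NewtonRatios.
Variable R : rcfType.

Lemma newton_ratio (s : seq R) k xi (r := \prod_(z <- s) ('X - z%:P)) :
  uniq s -> all (fun z => z < 0) s -> 0 < xi -> (0 < k < size s)%N ->
  (k.+1 * (size s - k).+1)%:R / (k * (size s - k))%:R * (r`_k.-1 / (xi * r`_k))
    <= r`_k / (xi * r`_k.+1).
Proof.
move=> us sneg xi0 /andP[k0 ks].
have rs : all (root r) s by apply/allP => z zs; rewrite root_prod_XsubC zs.
have := newton_ineq (k := k) us rs.
rewrite size_prod_XsubC leqnn k0 ks => /(_ isT isT).
have [a_gt0 b_gt0 c_gt0] : [/\ 0 < r`_k.-1, 0 < r`_k & 0 < r`_k.+1].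
  by split; apply: coef_prod_XsubC_gt0 => //;
    [exact: leq_trans (leq_pred k) (ltnW ks) | exact: ltnW].
have d_gt0 : 0 < (k * (size s - k))%:R :> R.
  by rewrite ltr0n muln_gt0 k0 subn_gt0.
set A := (k.+1 * _)%:R; set D := (k * _)%:R in d_gt0 * => newton; clearbody A D.
rewrite -subr_ge0.
have -> : r`_k / (xi * r`_k.+1) - A / D * (r`_k.-1 / (xi * r`_k)) =
    (D * r`_k ^+ 2 - A * r`_k.-1 * r`_k.+1) / (D * xi * r`_k * r`_k.+1).
  by field; rewrite !gt_eqF.
by rewrite divr_ge0 ?subr_ge0 // ltW // !mulr_gt0.
Qed.

Lemma newton_ratio_chain8 (s : seq R) xi (r := \prod_(z <- s) ('X - z%:P))
    (t := fun k => r`_k.-1 / (xi * r`_k)) :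
  uniq s -> all (fun z => z < 0) s -> size s = 8%N -> 0 < xi ->
  [/\ 8/5 * t 3%N <= t 4%N, 32/5 * t 1%N <= t 4%N, 25/16 * t 4%N <= t 5%N,
      8/5 * t 5%N <= t 6%N & 32/5 * t 5%N <= t 8%N].
Proof.
move=> us sneg s8 xi0.
have N k : (0 < k < 8)%N ->
    (k.+1 * (8 - k).+1)%:R / (k * (8 - k))%:R * t k <= t k.+1.
  by rewrite -s8; exact: newton_ratio.
have N1 : 16/7 * t 1%N <= t 2%N := N 1%N isT.
have N2 : 21/12 * t 2%N <= t 3%N := N 2%N isT.
have N3 : 24/15 * t 3%N <= t 4%N := N 3%N isT.
have N4 : 25/16 * t 4%N <= t 5%N := N 4%N isT.
have N5 : 24/15 * t 5%N <= t 6%N := N 5%N isT.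
have N6 : 21/12 * t 6%N <= t 7%N := N 6%N isT.
have N7 : 16/7 * t 7%N <= t 8%N := N 7%N isT.
by split; lra.
Qed.

End NewtonRatios.

Section Sigma0Ratios.
Variable R : realFieldType.

(* The a_5 condition forces t4 < B, and the a_1 condition together with the
   discriminant forces B (1 - t1) < 4 t1; this contradicts t1 <= 5/32 t4. *)
Lemma sigma0_ratios_t5_le1 (t1 t3 t4 t5 B G : R) :
  0 < t1 -> 0 < t3 -> t3 <= t4 -> 32/5 * t1 <= t4 -> 25/16 * t4 <= t5 -> t5 <= 1 ->
  B ^+ 2 < 4 * G -> G < (G + B) * t1 ->
  G < t5 * (t3 * t4 - (1 + B) * t4 + G + B) -> False.
Proof.
move=> t1_gt0 t3_gt0 t34 t14 t45 t5_le1 disc C1 C5.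
have G_gt0 : 0 < G by have := sqr_ge0 B; lra.
have t4_lt1 : t4 < 1 by lra.
have t4_ltB : t4 < B.
  have : t4 * t5 * (1 - t4) <= t4 * t5 * (1 - t3) by rewrite ler_wpM2l ?mulr_ge0; lra.
  have : 0 <= G * (1 - t5) by rewrite mulr_ge0; lra.
  have : 0 < t5 * (1 - t4) by rewrite mulr_gt0; lra.
  nra.
have : B * (1 - t1) < 4 * t1 by nra.
nra.
Qed.

Lemma sigma0_ratios_t5_gt1 (t4 t5 t6 t8 B G : R) :
  0 < t4 -> 1 < t5 -> 8/5 * t5 <= t6 -> 32/5 * t5 <= t8 -> t8 < 1 + B ->
  B ^+ 2 < 4 * G -> t6 * (t4 * t5 - (1 + B) * t5 + G + B) < G -> False.
Proof.
move=> t4_gt0 t5_gt1 t56 t58 C10 disc C6.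
have : B ^+ 2 * (t6 - 1) < 4 * (t6 * (B * (t5 - 1) + t5)).
  have : 0 <= t6 * (t5 * t4) by rewrite !mulr_ge0 //; lra.
  have : B ^+ 2 * (t6 - 1) <= 4 * G * (t6 - 1) by rewrite ler_wpM2r; lra.
  nra.
rewrite -subr_lt0 ltNge => /negP; apply.
(* Written in the slacks D, E, f >= 0 of the hypotheses, this difference is a
   polynomial with positive coefficients. *)
set D := 5 * B - 32 * t5 + 5; set E := 5 * t6 - 8 * t5; set f := t5 - 1.
have -> : B ^+ 2 * (t6 - 1) - 4 * (t6 * (B * (t5 - 1) + t5)) =
  (1387 + 5096*f + 6656*f^+2 + 3072*f^+3 + 629*E + 1088*E*f + 384*E*f^+2
   + 162*D + 464*D*f + 352*D*f^+2 + 54*D*E + 44*D*E*f + 3*D^+2 + 8*D^+2*f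
   + D^+2*E) / 125.
  by rewrite /D /E /f; field.
have [D_ge0 E_ge0 f_ge0] : [/\ 0 <= D, 0 <= E & 0 <= f].
  by rewrite /D /E /f; split; lra.
apply: divr_ge0 => //.
by repeat (exact: ler0n || assumption || apply: addr_ge0 || apply: mulr_ge0
           || apply: exprn_ge0).
Qed.

Lemma sigma0_ratios_infeasible (t1 t3 t4 t5 t6 t8 B G : R) :
  0 < t1 -> 0 < t3 -> 0 < t4 ->
  8/5 * t3 <= t4 -> 32/5 * t1 <= t4 -> 25/16 * t4 <= t5 ->
  8/5 * t5 <= t6 -> 32/5 * t5 <= t8 -> B ^+ 2 < 4 * G ->
  G < (G + B) * t1 -> G < t5 * (t3 * t4 - (1 + B) * t4 + G + B) ->
  t6 * (t4 * t5 - (1 + B) * t5 + G + B) < G -> t8 < 1 + B -> False.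
Proof.
move=> t1_gt0 t3_gt0 t4_gt0 t34 t14 t45 t56 t58 disc C1 C5 C6 C10.
have [t5_le1 | t5_gt1] := lerP t5 1.
  by apply: (sigma0_ratios_t5_le1 t1_gt0 t3_gt0 _ t14 t45 t5_le1 disc C1 C5); lra.
exact: (sigma0_ratios_t5_gt1 t4_gt0 t5_gt1 t56 t58 C10 disc C6).
Qed.

End Sigma0Ratios.

Section Sigma0Window.
Variable R : rcfType.

Lemma sigma0_window_infeasible (xi b g : R) (s : seq R)
    (p := ('X^2 + b%:P * 'X + g%:P) * ('X - xi%:P) * \prod_(z <- s) ('X - z%:P)) :
  0 < xi -> b ^+ 2 < 4 * g -> uniq s -> all (fun z => z < 0) s -> size s = 8%N ->
  0 < p`_1 -> 0 < p`_5 -> p`_6 < 0 -> p`_10 < 0 -> False.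
Proof.
move=> xi0 disc us sneg s8 p1 p5 p6 p10.
have [N34 N14 N45 N56 N58] := newton_ratio_chain8 us sneg s8 xi0.
set r := \prod_(z <- s) ('X - z%:P) in N34 N14 N45 N56 N58 *.
have pE : p = r * 'X^3 + (b - xi)%:P * (r * 'X^2) + (g - xi * b)%:P * (r * 'X)
    - (xi * g)%:P * r by rewrite /p -/r !(polyCB, polyCM); ring.
have r_gt0 i : (i <= 8)%N -> 0 < r`_i by rewrite -s8; exact: coef_prod_XsubC_gt0.
have r_neq0 i : (i <= 8)%N -> r`_i != 0 by move/r_gt0/lt0r_neq0.
have r8 : r`_8 = 1.
  by move: (monicP (monic_prod_XsubC s predT id)); rewrite lead_coefE size_prod_XsubC s8.
have [r9 r10] : r`_9 = 0 /\ r`_10 = 0.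
  by rewrite !nth_default // size_prod_XsubC s8.
have xi_neq0 : xi != 0 := lt0r_neq0 xi0.
rewrite /= r8 in N34 N14 N45 N56 N58.
set t1 := r`_0 / (xi * r`_1) in N14 *; set t3 := r`_2 / (xi * r`_3) in N34 *.
set t4 := r`_3 / (xi * r`_4) in N34 N14 N45 *.
set t5 := r`_4 / (xi * r`_5) in N45 N56 N58 *.
set t6 := r`_5 / (xi * r`_6) in N56 *; set t8 := r`_7 / (xi * 1) in N58 *.
set B := - b / xi; set G := g / xi ^+ 2.
have discBG : B ^+ 2 < 4 * G.
  rewrite -subr_gt0 (_ : _ - _ = (4 * g - b ^+ 2) / xi ^+ 2).
    by rewrite divr_gt0 ?exprn_gt0 ?subr_gt0.
  by rewrite /B /G; field.
(* (G + B) t1 - G = a_1 / (xi^3 r_1), and similarly for a_5, a_6 and a_10. *)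
have C1 : G < (G + B) * t1.
  rewrite -subr_gt0 (_ : _ - _ = p`_1 / (xi ^+ 3 * r`_1)).
    by rewrite divr_gt0 ?mulr_gt0 ?exprn_gt0 ?r_gt0.
  by rewrite pE !coefE /= /G /B /t1; field; rewrite xi_neq0 ?r_neq0.
have C5 : G < t5 * (t3 * t4 - (1 + B) * t4 + G + B).
  rewrite -subr_gt0 (_ : _ - _ = p`_5 / (xi ^+ 3 * r`_5)).
    by rewrite divr_gt0 ?mulr_gt0 ?exprn_gt0 ?r_gt0.
  rewrite pE !coefE !subSS !subn0 /= /G /B /t3 /t4 /t5.
  by field; rewrite xi_neq0 ?r_neq0.
have C6 : t6 * (t4 * t5 - (1 + B) * t5 + G + B) < G.
  rewrite -subr_gt0 (_ : _ - _ = - p`_6 / (xi ^+ 3 * r`_6)).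
    by rewrite divr_gt0 ?mulr_gt0 ?exprn_gt0 ?r_gt0 ?oppr_gt0.
  rewrite pE !coefE !subSS !subn0 /= /G /B /t4 /t5 /t6.
  by field; rewrite xi_neq0 ?r_neq0.
have C10 : t8 < 1 + B.
  rewrite -subr_gt0 (_ : _ - _ = - p`_10 / xi) ?divr_gt0 ?oppr_gt0 //.
  by rewrite pE !coefE !subSS !subn0 /= r8 r9 r10 /B /t8; field.
apply: (sigma0_ratios_infeasible _ _ _ N34 N14 N45 N56 N58 discBG C1 C5 C6 C10);
  by rewrite divr_gt0 ?mulr_gt0 ?r_gt0.
Qed.

End Sigma0Window.

Lemma root_deriv_mul (R : comNzRingType) (q r : {poly R}) x :
  root q x -> root r x -> root (q * r)^`() x.
Proof.
move=> /eqP qx /eqP rx.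
by rewrite /root derivM hornerD !hornerM qx rx !mulr0 mul0r addr0.
Qed.

Lemma monic_size3E (R : nzRingType) (q : {poly R}) :
  q \is monic -> size q = 3%N -> q = 'X^2 + (q`_1)%:P * 'X + (q`_0)%:P.
Proof.
move=> /monicP + sz3; rewrite lead_coefE sz3 /= => q2.
apply/polyP => -[|[|[|i]]]; rewrite !coefE /= ?mulr0 ?mulr1 ?add0r ?addr0 //.
by rewrite nth_default // sz3.
Qed.

Section OnePositiveRoot.
Variable R : realType.

Lemma factor_one_pos_root (p : {poly R}) n :
  p \is monic -> size p = n.+4 -> ~~ root p 0 ->
  num_roots_in p (fun x => 0 < x) 1 -> num_roots_in p (fun x => x < 0) n ->
  roots_simple_in p (fun x => (0 < x) || (x < 0)) ->
  exists xi b g (s : seq R),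
    [/\ 0 < xi, b ^+ 2 < 4 * g, [/\ uniq s, size s = n & all (fun z => z < 0) s]
      & p = ('X^2 + b%:P * 'X + g%:P) * ('X - xi%:P) * \prod_(z <- s) ('X - z%:P)].
Proof.
move=> monp szp p0 [ps [_ szps posE]] [s [us szs negE]] simp.
case: ps szps posE => [|xi []] // _ posE.
have /andP[xi0 pxi] : (0 < xi) && root p xi by rewrite -posE mem_seq1.
have sneg : all (fun z => z < 0) s by apply/allP => z; rewrite negE => /andP[].
have ps : all (root p) s by apply/allP => z; rewrite negE => /andP[].
set T := \prod_(z <- xi :: s) ('X - z%:P).
have [q pE] : exists q, p = q * T.
  apply: uniq_roots_prod_XsubC; first by rewrite /= pxi.
  rewrite uniq_rootsE /= us andbT; apply/negP => /(allP sneg); lra.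
have monT : T \is monic by apply: monic_prod_XsubC.
have monq : q \is monic by move: monp; rewrite pE monicMr.
have szq : size q = 3%N.
  move: szp; rewrite pE size_Mmonic ?monic_neq0 // size_prod_XsubC /= szs !addnS /=.
  by move/eqP; rewrite eqSS -add3n eqn_add2r => /eqP.
have noroot x : ~~ root q x.
  apply/negP => qx; have px : root p x by rewrite pE rootM qx.
  have xP : (0 < x) || (x < 0).
    by rewrite orbC -neq_lt; apply: contraNneq p0 => <-.
  have Tx : root T x by rewrite root_prod_XsubC inE -mem_seq1 posE negE px !andbT.
  by have /negP := simp x xP px; rewrite pE root_deriv_mul.
exists xi, q`_1, q`_0, s; split => //.
  by rewrite -subr_lt0; apply/(Pdeg2.RealMonic.deg2_poly_noroot szq monq).
by rewrite pE -monic_size3E // /T big_cons mulrA.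
Qed.

End OnePositiveRoot.

Theorem theorem1 (R : realType) : ~ realizable R sigma0 1 8.
Proof.
case=> p [monp [szp sgnp] pos neg simp].
have sz12 : size p = 12%N by rewrite szp.
have p0 : ~~ root p 0.
  rewrite /root horner_coef0; have := sgnp 0%N.
  by rewrite sz12 /= => /(_ isT)/ltr0_neq0.
have [xi [b [g [s [xi0 disc [us s8 sneg] pE]]]]] :=
  factor_one_pos_root monp sz12 p0 pos neg simp.
have := sigma0_window_infeasible xi0 disc us sneg s8; rewrite /= -pE; apply.
- by have := sgnp 1%N; rewrite sz12 /=; apply.
- by have := sgnp 5%N; rewrite sz12 /=; apply.
- by have := sgnp 6%N; rewrite sz12 /=; apply.
- by have := sgnp 10%N; rewrite sz12 /=; apply.
Qed.
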